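(* Let $S$ be a finite poset with acyclic Hasse graph $\Gamma(S)$, and let $s_t$ be a terminal point of $S$ which is a Dynkin point of $S$. Then for every poset $\overrightarrow S$ on the same set with $\Gamma(\overrightarrow S)=\Gamma(S)$, the point $s_t$ is a Dynkin point of $\overrightarrow S$.
   Context: For $S=\{s_1,\dots,s_n\}$, $f_S(x)=\sum_i x_i^2+\sum_{s_i<s_j}x_ix_j$, so $\frac{\partial f_S}{\partial x_m}(x)=2x_m+\sum_{j\ne m,\ s_j\text{ comparable with }s_m}x_j$. $\Gamma(S)$ has vertex set $S$ and an edge between $s,s'$ when one covers the other. A terminal point is a vertex of degree $\le1$ in $\Gamma(S)$. $s_m$ is a Dynkin point of $S$ if there is a nonzero $d\in\mathbb Z^n$ with $0\le\frac{\partial f_S}{\partial x_m}(d)\le2$ and $\frac{\partial f_S}{\partial x_j}(d)=0$ for $j\ne m$. *)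

From mathcomp Require Import all_boot all_order all_algebra.
Set Implicit Arguments. Unset Strict Implicit. Unset Printing Implicit Defensive.
Import Order.TTheory GRing.Theory Num.Theory.

(* A finite poset S = {s_0,...,s_(n-1)} is encoded by its (non-strict) order
   relation [le] on the index type 'I_n. *)
Definition is_poset (n : nat) (le : rel 'I_n) : Prop :=
  [/\ reflexive le, antisymmetric le & transitive le].

Definition plt (n : nat) (le : rel 'I_n) : rel 'I_n :=
  fun i j => (i != j) && le i j.

Definition covers (n : nat) (le : rel 'I_n) : rel 'I_n :=
  fun i j => plt le i j && ~~ [exists k, plt le i k && plt le k j].

Definition hasse_adj (n : nat) (le : rel 'I_n) : rel 'I_n :=
  fun i j => covers le i j || covers le j i.

Definition hasse_acyclic (n : nat) (le : rel 'I_n) : Prop :=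
  ~ exists c : seq 'I_n, [/\ 2 < size c, uniq c & cycle (hasse_adj le) c].

Definition terminal (n : nat) (le : rel 'I_n) (t : 'I_n) : Prop :=
  #|[set j | hasse_adj le t j]| <= 1.

Definition comparable_pt (n : nat) (le : rel 'I_n) (m j : 'I_n) : bool :=
  (j != m) && (le m j || le j m).

Definition fS (n : nat) (le : rel 'I_n) (x : 'I_n -> int) : int :=
  (\sum_i x i ^+ 2 + \sum_i \sum_(j | plt le i j) x i * x j)%R.

(* partial derivative of f_S in direction m, as given:
   2 x_m + sum_{j <> m, s_j comparable with s_m} x_j *)
Definition dfS (n : nat) (le : rel 'I_n) (x : 'I_n -> int) (m : 'I_n) : int :=
  (2 * x m + \sum_(j | comparable_pt le m j) x j)%R.

Definition dynkin_point (n : nat) (le : rel 'I_n) (m : 'I_n) : Prop :=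
  exists d : {ffun 'I_n -> int},
    [/\ exists i, d i != 0%R,
        (0 <= dfS le d m <= 2)%R
      & forall j, j != m -> dfS le d j = 0%R].

(* Induction on the number of Hasse edges u < v of S that are reversed in S'.
   As Gamma(S) is a tree, deleting such an edge splits S into a down-set U
   containing u and its complement; reversing only that edge while keeping the
   order inside U and outside U gives a poset with the same Hasse graph and one
   reversed edge fewer. Its Gram matrix is congruent to the Gram matrix G of f_S:
   G' = R G R^T with R = 1 - a e_u^T - b e_v^T an involution, where a and b are
   the rows of G at u and at v restricted to U and to its complement. When the
   terminal point t is u or v the cut can be chosen with t alone on its side, so
   R e_t = -e_t; otherwise R e_t = e_t. Either way R^T carries a Dynkin vector of
   t in S to one in the flipped poset, up to sign. *)

From mathcomp Require Import all_boot all_order all_algebra.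
From mathcomp Require Import ring.
Set Implicit Arguments. Unset Strict Implicit. Unset Printing Implicit Defensive.
Import Order.TTheory GRing.Theory Num.Theory.

Section Covers.
Variables (n : nat) (le : rel 'I_n).

Lemma covers_le x y : covers le x y -> le x y.
Proof. by case/andP=> /andP[]. Qed.

Lemma covers_neq x y : covers le x y -> x != y.
Proof. by case/andP=> /andP[]. Qed.

Hypothesis le_poset : is_poset le.

Lemma covers_asym x y : covers le x y -> ~~ covers le y x.
Proof.
case: le_poset => _ anti _ /andP[/andP[nxy lxy] _]; apply/negP=> /covers_le lyx.
by case/eqP: nxy; apply: anti; rewrite lxy lyx.
Qed.

Lemma le_connect_covers x y : le x y = connect (covers le) x y.
Proof.
case: le_poset => refl anti tr; apply/idP/idP; last first.
  case/connectP=> p; elim: p x => [x _ -> // | z p IH] x /=.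
  by case/andP=> /covers_le lxz /IH H /H; apply: tr.
have [k] := ubnP #|[pred z | le x z && le z y]|; elim: k x y => // k IH x y ltk lxy.
have [-> | nxy] := eqVneq x y; first exact: connect0.
have [cxy | ncxy] := boolP (covers le x y); first exact: connect1.
move: ncxy; rewrite /covers /plt nxy lxy negbK.
case/existsP=> z /andP[/andP[nxz lxz] /andP[nzy lzy]].
have shrink a b w : le x a -> le b y -> le x w && le w y -> ~~ (le a w && le w b) ->
    #|[pred z | le a z && le z b]| < k.
  move=> lxa lby wxy wab; rewrite ltnS in ltk; apply: leq_trans ltk; apply: proper_card.
  apply/properP; split; last by exists w.
  by apply/subsetP=> c /andP[lac lcb]; rewrite inE (tr _ _ _ lxa lac) (tr _ _ _ lcb lby).
apply: (connect_trans (y := z)); apply: IH => //.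
- apply: (shrink x z y) => //; first by rewrite lxy refl.
  by apply/negP=> /andP[_ lyz]; case/eqP: nzy; apply: anti; rewrite lzy lyz.
- apply: (shrink z y x) => //; first by rewrite lxy refl.
  by apply/negP=> /andP[lzx _]; case/eqP: nxz; apply: anti; rewrite lxz lzx.
Qed.

End Covers.

Lemma eq_poset_covers n (le1 le2 : rel 'I_n) : is_poset le1 -> is_poset le2 ->
  covers le1 =2 covers le2 -> le1 =2 le2.
Proof.
by move=> P1 P2 E x y; rewrite (le_connect_covers P1) (le_connect_covers P2) (eq_connect E).
Qed.

Lemma connect_cross (T : finType) (e : rel T) (P : pred T) a b :
  connect e a b -> P a -> ~~ P b ->
  exists x y, [/\ connect e a x, e x y, P x, ~~ P y & connect e y b].
Proof.
case/connectP=> p; elim: p a => [a _ -> -> // | c p IH] a /= /andP[eac pc] lastb Pa nPb.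
have [Pc | nPc] := boolP (P c).
  have [x [y [cx exy Px nPy yb]]] := IH c pc lastb Pc nPb.
  by exists x, y; split=> //; exact: connect_trans (connect1 eac) cx.
by exists a, c; split; rewrite ?connect0 //; apply/connectP; exists p.
Qed.

Definition edge_cut n (le : rel 'I_n) (u v : 'I_n) (U : {set 'I_n}) : Prop :=
  [/\ covers le u v, u \in U, v \notin U &
      forall a b, a \in U -> b \notin U -> hasse_adj le a b -> (a == u) && (b == v)].

Definition edge_flip n (le : rel 'I_n) (u v : 'I_n) (U : {set 'I_n}) : rel 'I_n :=
  fun a b => if a \in U then (b \in U) && le a b
             else if b \in U then le a v && le u b else le a b.

Lemma edge_flip_poset n (le : rel 'I_n) u v U :
  is_poset le -> is_poset (edge_flip le u v U).
Proof.
case=> refl anti tr; split.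
- by move=> x; rewrite /edge_flip; case: ifP => xU; rewrite ?xU refl.
- move=> x y; rewrite /edge_flip.
  by case: (x \in U); case: (y \in U); rewrite /= ?andbF //; apply: anti.
- move=> y x z; rewrite /edge_flip.
  case: (x \in U); case: (y \in U); case: (z \in U); rewrite /= ?andbF //; try exact: tr.
  + by move=> /andP[lxv luy] lyz; rewrite lxv (tr _ _ _ luy lyz).
  + by move=> lxy /andP[lyv luz]; rewrite luz (tr _ _ _ lxy lyv).
Qed.

Section EdgeFlip.
Variables (n : nat) (le : rel 'I_n) (u v : 'I_n) (U : {set 'I_n}).

Lemma edge_flip_same a b : (a \in U) = (b \in U) -> edge_flip le u v U a b = le a b.
Proof. by rewrite /edge_flip => ->; case: (b \in U). Qed.

Lemma edge_flip_in_out a b : a \in U -> b \notin U -> edge_flip le u v U a b = false.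
Proof. by rewrite /edge_flip => -> /negbTE ->. Qed.

Lemma edge_flip_out_in a b :
  a \in U -> b \notin U -> edge_flip le u v U b a = le b v && le u a.
Proof. by rewrite /edge_flip => -> /negbTE ->. Qed.

End EdgeFlip.

Section EdgeCut.
Variables (n : nat) (le : rel 'I_n) (u v : 'I_n) (U : {set 'I_n}).
Hypotheses (le_poset : is_poset le) (cut : edge_cut le u v U).

Local Notation F := (edge_flip le u v U).

Lemma cut_neq : u != v.
Proof. by case: cut => /covers_neq. Qed.

Lemma cut_le_out_in a b : a \in U -> b \notin U -> le b a = false.
Proof.
case: cut => cuv _ _ only_uv aU bU; apply/negP; rewrite (le_connect_covers le_poset).
case/(connect_cross (P := fun z => z \notin U))/(_ bU)=> [|x [y [_ cxy xU yU _]]].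
  by rewrite negbK.
rewrite negbK in yU; have /andP[/eqP yu /eqP xv] : (y == u) && (x == v).
  by apply: only_uv; rewrite /hasse_adj ?cxy ?orbT.
by move: cxy; rewrite yu xv; apply/negP; apply: covers_asym.
Qed.

Lemma cut_le_in_out a b : a \in U -> b \notin U -> le a b = le a u && le v b.
Proof.
case: cut => cuv _ _ only_uv aU bU; have [_ _ tr] := le_poset.
apply/idP/andP=> [|[lau lvb]]; last exact: tr _ _ _ (tr _ _ _ lau (covers_le cuv)) lvb.
rewrite (le_connect_covers le_poset); case/(connect_cross (P := fun z => z \in U))/(_ aU bU).
move=> x [y [ax cxy xU yU yb]].
have /andP[/eqP xu /eqP yv] := only_uv x y xU yU (introT orP (or_introl cxy)).
by rewrite !(le_connect_covers le_poset) -xu -yv.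
Qed.

Lemma cut_covers_in_out a b :
  a \in U -> b \notin U -> covers le a b = (a == u) && (b == v).
Proof.
case: cut => cuv _ _ only_uv aU bU; apply/idP/idP => [cab | /andP[/eqP-> /eqP->] //].
by apply: only_uv; rewrite /hasse_adj ?cab.
Qed.

Lemma cut_covers_out_in a b : a \in U -> b \notin U -> covers le b a = false.
Proof. by move=> aU bU; apply/negP=> /covers_le; rewrite cut_le_out_in. Qed.

Lemma covers_edge_flip_same a b : (a \in U) = (b \in U) -> covers F a b = covers le a b.
Proof.
move=> ab; rewrite /covers /plt edge_flip_same //; congr (_ && ~~ _).
apply: eq_existsb => k; have [ka | ka] := eqVneq (k \in U) (a \in U).
  by rewrite !edge_flip_same // -?ab.
have [aU | aU] := boolP (a \in U).
  have kU : k \notin U by move: ka; rewrite aU; case: (k \in U).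
  have bU : b \in U by rewrite -ab.
  by rewrite edge_flip_in_out // (@cut_le_out_in b k) // !andbF ?andFb.
have kU : k \in U by move: ka; rewrite (negbTE aU); case: (k \in U).
have bU : b \notin U by rewrite -ab.
by rewrite (edge_flip_in_out le u v kU bU) // (@cut_le_out_in k a) // !andbF ?andFb.
Qed.

Lemma covers_edge_flip_in_out a b : a \in U -> b \notin U -> covers F a b = false.
Proof. by move=> aU bU; rewrite /covers /plt edge_flip_in_out // andbF. Qed.

Lemma covers_edge_flip_out_in a b :
  a \in U -> b \notin U -> covers F b a = (a == u) && (b == v).
Proof.
case: cut => cuv uU vU _ aU bU; have [refl anti _] := le_poset.
have sep x y : x \in U -> y \notin U -> y != x by move=> xU; apply: contraNneq => ->.
apply/idP/idP => [|/andP[/eqP-> /eqP->]].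
  rewrite /covers /plt edge_flip_out_in // sep //=.
  case/andP=> /andP[lbv lua] /existsP between.
  apply/andP; split; apply/eqP/(contra_not_eq _ between) => ne.
    exists u; rewrite (edge_flip_out_in le u v uU bU) // edge_flip_same ?uU ?aU //.
    by rewrite lbv lua refl sep // eq_sym ne.
  exists v; rewrite edge_flip_same ?(negbTE vU) ?(negbTE bU) // edge_flip_out_in //.
  by rewrite lbv lua refl ne sep.
rewrite /covers /plt edge_flip_out_in // !refl sep //=.
apply/negP=> /existsP[k]; have [kU | kU] := boolP (k \in U).
  rewrite edge_flip_out_in // edge_flip_same ?uU // refl /=.
  by case/andP=> /andP[_ luk] /andP[nku lku]; case/eqP: nku; apply: anti; rewrite luk lku.
rewrite edge_flip_same ?(negbTE vU) ?(negbTE kU) // edge_flip_out_in // refl andbT.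
by case/andP=> /andP[nvk lvk] /andP[_ lkv]; case/eqP: nvk; apply: anti; rewrite lvk lkv.
Qed.

Lemma hasse_adj_edge_flip : hasse_adj F =2 hasse_adj le.
Proof.
move=> a b; have [ab | ab] := eqVneq (a \in U) (b \in U).
  by rewrite /hasse_adj !covers_edge_flip_same.
wlog aU : a b ab / a \in U.
  move=> H; have [aU | aU] := boolP (a \in U); first exact: H.
  rewrite /hasse_adj orbC [RHS]orbC; apply: H; first by rewrite eq_sym.
  by move: ab; rewrite (negbTE aU); case: (b \in U).
have bU : b \notin U by move: ab; rewrite aU; case: (b \in U).
rewrite /hasse_adj covers_edge_flip_in_out // covers_edge_flip_out_in //.
by rewrite cut_covers_in_out // cut_covers_out_in // orbF.
Qed.

End EdgeCut.

Lemma hasse_adjC n (le : rel 'I_n) a b : hasse_adj le a b = hasse_adj le b a.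
Proof. by rewrite /hasse_adj orbC. Qed.

Lemma terminal_adj_uniq n (le : rel 'I_n) t a b :
  terminal le t -> hasse_adj le t a -> hasse_adj le t b -> a = b.
Proof. by move/card_le1_eqP=> T ha hb; apply: T; rewrite inE. Qed.

Lemma eq_hasse_acyclic n (le1 le2 : rel 'I_n) :
  hasse_adj le1 =2 hasse_adj le2 -> hasse_acyclic le1 -> hasse_acyclic le2.
Proof. by move=> E Ac [c [c3 uc cc]]; apply: Ac; exists c; rewrite (eq_cycle E). Qed.

Lemma eq_terminal n (le1 le2 : rel 'I_n) t :
  hasse_adj le1 =2 hasse_adj le2 -> terminal le1 t -> terminal le2 t.
Proof.
rewrite /terminal => E.
suff -> : [set j | hasse_adj le2 t j] = [set j | hasse_adj le1 t j] by [].
by apply/setP=> j; rewrite !inE E.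
Qed.

Section CutExistence.
Variables (n : nat) (le : rel 'I_n) (u v : 'I_n).
Hypothesis cuv : covers le u v.

Lemma edge_cut_set1 : terminal le u -> edge_cut le u v [set u].
Proof.
move=> T; split; rewrite ?in_set1 ?eqxx //; first by rewrite eq_sym (covers_neq cuv).
move=> a b; rewrite !in_set1 => /eqP-> _ ub; rewrite eqxx /=; apply/eqP.
by apply: terminal_adj_uniq T ub _; rewrite /hasse_adj cuv.
Qed.

Lemma edge_cut_setC1 : terminal le v -> edge_cut le u v [set~ v].
Proof.
move=> T; split; rewrite ?in_setC1 ?eqxx //; first exact: covers_neq cuv.
move=> a b _; rewrite in_setC1 negbK => /eqP-> av; rewrite eqxx andbT; apply/eqP.
by apply: (terminal_adj_uniq T); rewrite hasse_adjC // /hasse_adj cuv.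
Qed.

Lemma edge_cut_exists : hasse_acyclic le -> exists U, edge_cut le u v U.
Proof.
move=> Ac; have nuv := covers_neq cuv.
pose e := [rel a b | hasse_adj le a b && ~~ ((a == u) && (b == v) || (a == v) && (b == u))].
(* A path from u to v avoiding the edge would close a cycle with it. *)
have nuv_e : ~~ connect e u v.
  apply/negP=> /connectP[p pth]; case: (shortenP pth) => p' pth' up' _ lst'.
  apply: Ac; exists (u :: p'); split => //.
    case: p' pth' up' lst' => [|y [|z p'']] //=.
      by move=> _ _ euv; rewrite euv eqxx in nuv.
    by move=> /andP[/andP[_]] + _ _ yv; rewrite yv !eqxx.
  rewrite /cycle rcons_path -lst' hasse_adjC /hasse_adj cuv andbT.
  by apply: sub_path pth' => a b /andP[].
exists [set a | connect e u a]; split; rewrite ?inE ?connect0 //.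
move=> a b; rewrite !inE => ua ub ab; case eab: (e a b).
  by rewrite (connect_trans ua (@connect1 _ e a b eab)) in ub.
move: eab; rewrite /= ab => /negbFE/orP[// | /andP[/eqP av _]].
by rewrite -av ua in nuv_e.
Qed.

Lemma edge_cut_exists_terminal t : hasse_acyclic le -> terminal le t ->
  exists U, [/\ edge_cut le u v U, t = u -> U = [set u] & t = v -> U = [set~ v]].
Proof.
move=> Ac; have nuv := covers_neq cuv.
have [-> T | ntu] := eqVneq t u.
  exists [set u]; split=> //; first exact: edge_cut_set1.
  by move=> uv; rewrite uv eqxx in nuv.
have [-> T | ntv] := eqVneq t v.
  exists [set~ v]; split=> //; first exact: edge_cut_setC1.
  by move=> vu; rewrite vu eqxx in nuv.
move=> _; have [U C] := edge_cut_exists Ac.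
by exists U; split=> // /eqP; rewrite ?(negbTE ntu) ?(negbTE ntv).
Qed.

End CutExistence.

Local Open Scope ring_scope.

(* In a poset, [j <= k] + [k <= j] is 2 on the diagonal and 1 exactly at
   comparable pairs. *)
Definition gram n (le : rel 'I_n) : 'M[int]_n :=
  \matrix_(j, k) ((le j k)%:R + (le k j)%:R).

Lemma tr_gram n (le : rel 'I_n) : (gram le)^T = gram le.
Proof. by apply/matrixP=> j k; rewrite !mxE addrC. Qed.

Lemma dfS_gram n (le : rel 'I_n) (x : 'I_n -> int) j :
  is_poset le -> dfS le x j = (gram le *m \col_k x k) j 0.
Proof.
case=> refl anti _; rewrite /dfS [RHS]mxE [RHS](bigD1 j) //= !mxE refl.
congr (_ + _); rewrite big_mkcond [RHS]big_mkcond; apply: eq_bigr => k _ /=.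
rewrite !mxE /comparable_pt; have [// | kj] := eqVneq k j.
have : ~~ (le j k && le k j) by apply: contraNN kj => /anti ->.
by case: (le j k); case: (le k j) => //= _; ring.
Qed.

Definition mx_dynkin n (A : 'M[int]_n) (t : 'I_n) : Prop :=
  exists2 d : 'cV_n, d != 0 & exists2 c : int, 0 <= c <= 2 & A *m d = c *: delta_mx t 0.

Lemma dynkin_pointE n (le : rel 'I_n) t :
  is_poset le -> dynkin_point le t <-> mx_dynkin (gram le) t.
Proof.
move=> P; split.
  case=> d [[i di] c02 dj]; exists (\col_k d k).
    by apply/matrix0Pn; exists i, 0; rewrite mxE.
  exists (dfS le d t) => //; apply/matrixP=> j k; rewrite ord1 -dfS_gram // !mxE eqxx andbT.
  by have [-> | jt] := eqVneq j t; rewrite ?mulr1 // mulr0 dj.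
case=> d /matrix0Pn[i [k di]] [c c02 Ad]; exists [ffun k => d k 0].
have grad j : dfS le [ffun k => d k 0] j = c * (j == t)%:R.
  rewrite dfS_gram //.
  have -> : \col_k [ffun k => d k 0] k = d by apply/matrixP=> l m; rewrite ord1 !mxE ffunE.
  by rewrite Ad !mxE eqxx andbT.
split; first by exists i; rewrite ffunE -(ord1 k).
  by rewrite grad eqxx mulr1.
by move=> j /negbTE jt; rewrite grad jt mulr0.
Qed.

Lemma mx_dynkin_congr n (A R : 'M[int]_n) t (s : int) :
  R \in unitmx -> s ^+ 2 = 1 -> R *m delta_mx t 0 = s *: (delta_mx t 0 : 'cV_n) ->
  mx_dynkin A t -> mx_dynkin (R *m A *m R^T) t.
Proof.
move=> uR s2 Rt [d d0 [c c02 Ad]]; have uRt : R^T \in unitmx by rewrite unitmx_tr.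
exists (s *: (invmx R^T *m d)).
  apply: contraNneq d0 => sd0; rewrite -(mulKVmx uRt d) -[invmx _ *m d]scale1r -s2.
  by rewrite expr2 -scalerA sd0 scaler0 mulmx0.
exists c => //; rewrite -scalemxAr -[R *m A *m R^T *m _]mulmxA mulKVmx //.
by rewrite -mulmxA Ad -scalemxAr Rt !scalerA mulrAC -expr2 s2 mul1r.
Qed.

Lemma sum_delta (R : nzSemiRingType) (I : finType) (F : I -> R) i0 :
  \sum_i (i == i0)%:R * F i = F i0.
Proof.
by rewrite (bigD1 i0) //= eqxx mul1r big1 ?addr0 // => i /negbTE->; rewrite mul0r.
Qed.

Lemma trmx_congr_sym (R : comNzRingType) n (A M : 'M[R]_n) :
  M^T = M -> (A *m M *m A^T)^T = A *m M *m A^T.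
Proof. by move=> sM; rewrite !trmx_mul trmxK sM mulmxA. Qed.

Lemma congr_1B (R : comNzRingType) n (N M : 'M[R]_n) :
  (1%:M - N) *m M *m (1%:M - N)^T = M - N *m M - (M *m N^T - N *m M *m N^T).
Proof. by rewrite linearB /= trmx1 mulmxBl mul1mx !mulmxBr !mulmx1 mulmxBl. Qed.

Section CutCongruence.
Variables (n : nat) (le : rel 'I_n) (u v : 'I_n) (U : {set 'I_n}).
Hypotheses (le_poset : is_poset le) (cut : edge_cut le u v U).

Local Notation G := (gram le).

Let a j := (j \in U)%:R * G u j.
Let b j := (j \notin U)%:R * G v j.

Definition cut_shift : 'M[int]_n :=
  \matrix_(j, k) (a j * (k == u)%:R + b j * (k == v)%:R).

Definition cut_mx : 'M[int]_n := 1%:M - cut_shift.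

Lemma mul_cut_shift p (M : 'M[int]_(n, p)) :
  cut_shift *m M = \matrix_(j, l) (a j * M u l + b j * M v l).
Proof.
apply/matrixP=> j l; rewrite !mxE; under eq_bigr => k _ do rewrite mxE mulrDl -!mulrA.
by rewrite big_split /= -!mulr_sumr !sum_delta /a /b !mulrA.
Qed.

Lemma mul_tr_cut_shift p (M : 'M[int]_(p, n)) :
  M *m cut_shift^T = \matrix_(j, l) (a l * M j u + b l * M j v).
Proof.
by apply/matrixP=> j l; rewrite -[M]trmxK -trmx_mul mul_cut_shift !mxE.
Qed.

Lemma gram_refl j : G j j = 2.
Proof. by case: le_poset => refl _ _; rewrite mxE refl. Qed.

Lemma cut_coef_in j : j \in U -> a j = G u j /\ b j = 0.
Proof. by rewrite /a /b => ->; rewrite mul1r mul0r. Qed.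

Lemma cut_coef_out j : j \notin U -> a j = 0 /\ b j = G v j.
Proof. by rewrite /a /b => /[dup] /negbTE -> ->; rewrite mul1r mul0r. Qed.

Lemma cut_shift_sq : cut_shift *m cut_shift = cut_shift *+ 2.
Proof.
case: cut => _ uU vU _.
have [au bu] := cut_coef_in uU; have [av bv] := cut_coef_out vU.
apply/matrixP=> j l; rewrite mul_cut_shift !mxE au bu av bv !gram_refl; ring.
Qed.

Lemma cut_mx_unit : cut_mx \in unitmx.
Proof.
have invol : cut_mx *m cut_mx = 1%:M.
  rewrite /cut_mx mulmxBl !mulmxBr !mul1mx mulmx1 cut_shift_sq mulr2n.
  by rewrite opprB addrK subrK.
by case: (mulmx1_unit invol).
Qed.

Lemma gram_edge_flip : gram (edge_flip le u v U) = cut_mx *m G *m cut_mx^T.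
Proof.
have [refl _ _] := le_poset; case: (cut) => _ uU vU _.
apply/matrixP=> j l; wlog: j l / (j \in U) || (l \notin U).
  move=> H; have [|jl] := boolP ((j \in U) || (l \notin U)); first exact: H.
  rewrite -[gram _]tr_gram -[_ *m _ *m _](trmx_congr_sym _ (tr_gram le)) mxE [RHS]mxE.
  by apply: H; move: jl; rewrite negb_or negbK => /andP[_ ->].
move=> jl; rewrite congr_1B !mul_tr_cut_shift !mul_cut_shift !mxE.
have [jU | jU] := boolP (j \in U); last first.
  have lU : l \notin U by rewrite (negbTE jU) in jl.
  have [aj bj] := cut_coef_out jU; have [al bl] := cut_coef_out lU.
  have {}jl : (j \in U) = (l \in U) by rewrite (negbTE jU) (negbTE lU).
  rewrite aj bj al bl (edge_flip_same le u v jl) (edge_flip_same le u v (esym jl)).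
  by rewrite !mxE !refl /=; ring.
have [aj bj] := cut_coef_in jU; rewrite aj bj.
have [lU | lU] := boolP (l \in U).
  have [al bl] := cut_coef_in lU; have {}jl : (j \in U) = (l \in U) by rewrite jU lU.
  rewrite al bl (edge_flip_same le u v jl) (edge_flip_same le u v (esym jl)).
  by rewrite !mxE !refl /=; ring.
have [al bl] := cut_coef_out lU; rewrite al bl.
rewrite (edge_flip_in_out le u v jU lU) (edge_flip_out_in le u v jU lU) !mxE.
have le_in_out := cut_le_in_out le_poset cut.
have le_out_in := cut_le_out_in le_poset cut.
rewrite (le_in_out _ _ jU lU) (le_in_out _ _ jU vU).
rewrite (le_in_out _ _ uU lU) (le_in_out _ _ uU vU).
rewrite (le_out_in _ _ jU lU) (le_out_in _ _ jU vU).
rewrite (le_out_in _ _ uU lU) (le_out_in _ _ uU vU).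
by rewrite !refl /= !andbT -!mulnb !natrM; ring.
Qed.

Lemma cut_mx_delta t : (t = u -> U = [set u]) -> (t = v -> U = [set~ v]) ->
  exists2 s : int, s ^+ 2 = 1 &
    cut_mx *m delta_mx t 0 = s *: (delta_mx t 0 : 'cV_n).
Proof.
move=> tu tv; have nuv := cut_neq cut.
rewrite /cut_mx mulmxBl mul1mx mul_cut_shift.
have [etu | ntu] := eqVneq t u.
  exists (-1); first by rewrite sqrrN expr1n.
  subst t; have eU := tu erefl; apply/matrixP=> j k.
  rewrite ord1 !mxE !eqxx [v == u]eq_sym (negbTE nuv) /a eU in_set1 /=.
  by have [-> | ju] := eqVneq j u; rewrite ?gram_refl /b /=; ring.
have [etv | ntv] := eqVneq t v.
  exists (-1); first by rewrite sqrrN expr1n.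
  subst t; have eU := tv erefl; apply/matrixP=> j k.
  rewrite ord1 !mxE !eqxx (negbTE nuv) /b eU in_setC1 negbK /=.
  by have [-> | jv] := eqVneq j v; rewrite ?gram_refl /a /=; ring.
exists 1; first by rewrite expr1n.
apply/matrixP=> j k; rewrite !mxE [u == t]eq_sym (negbTE ntu) [v == t]eq_sym (negbTE ntv).
by rewrite /=; ring.
Qed.

Lemma dynkin_point_edge_flip t : (t = u -> U = [set u]) -> (t = v -> U = [set~ v]) ->
  dynkin_point le t -> dynkin_point (edge_flip le u v U) t.
Proof.
move=> tu tv; have [s s2 Rt] := cut_mx_delta tu tv.
rewrite (dynkin_pointE t le_poset) (dynkin_pointE t (edge_flip_poset u v U le_poset)).
by rewrite gram_edge_flip; apply: mx_dynkin_congr cut_mx_unit s2 Rt.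
Qed.

End CutCongruence.

Local Close Scope ring_scope.

Lemma eq_dynkin_point n (le1 le2 : rel 'I_n) t :
  le1 =2 le2 -> dynkin_point le1 t -> dynkin_point le2 t.
Proof.
have eq_dfS x j : le1 =2 le2 -> dfS le1 x j = dfS le2 x j.
  by move=> E; congr (_ + _)%R; apply: eq_bigl => k; rewrite /comparable_pt !E.
by move=> E [d [d0 dt dj]]; exists d; split; rewrite -?eq_dfS // => j /dj; rewrite eq_dfS.
Qed.

Definition reversed_edges n (le le' : rel 'I_n) : {set 'I_n * 'I_n} :=
  [set p | covers le p.1 p.2 && covers le' p.2 p.1].

Lemma reversed_edges0_eq n (le le' : rel 'I_n) : is_poset le -> is_poset le' ->
  hasse_adj le' =2 hasse_adj le -> reversed_edges le le' = set0 -> le =2 le'.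
Proof.
move=> P P' E /setP d0; apply: eq_poset_covers => // x y.
apply/idP/idP => cxy.
  have /orP[// | c'yx] : hasse_adj le' x y by rewrite E /hasse_adj cxy.
  by move: (d0 (x, y)); rewrite !inE cxy c'yx.
have /orP[// | cyx] : hasse_adj le x y by rewrite -E /hasse_adj cxy.
by move: (d0 (y, x)); rewrite !inE cyx cxy.
Qed.

Lemma card_reversed_edges_flip n (le le' : rel 'I_n) u v U :
  is_poset le -> edge_cut le u v U -> is_poset le' -> (u, v) \in reversed_edges le le' ->
  #|reversed_edges (edge_flip le u v U) le'| < #|reversed_edges le le'|.
Proof.
move=> P C P' uv; have [_ uU vU _] := C.
apply: proper_card; apply/properP; split; last first.
  by exists (u, v) => //; rewrite inE /= covers_edge_flip_in_out.
apply/subsetP=> [[x y]]; rewrite !inE /= => /andP[cxy c'yx]; rewrite c'yx andbT.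
have [xy | xy] := eqVneq (x \in U) (y \in U); first by rewrite -(covers_edge_flip_same P C xy).
have [xU | xU] := boolP (x \in U).
  have yU : y \notin U by move: xy; rewrite xU; case: (y \in U).
  by rewrite covers_edge_flip_in_out in cxy.
have yU : y \in U by move: xy; rewrite (negbTE xU); case: (y \in U).
move: cxy; rewrite (covers_edge_flip_out_in P C yU xU) => /andP[/eqP yu /eqP xv].
by move: uv c'yx; rewrite inE yu xv => /andP[_ /(covers_asym P')/negbTE ->].
Qed.

Theorem lemma7 (n : nat) (le le' : rel 'I_n) (t : 'I_n) :
  is_poset le -> hasse_acyclic le -> terminal le t -> dynkin_point le t ->
  is_poset le' -> (forall i j, hasse_adj le' i j = hasse_adj le i j) ->
  dynkin_point le' t.
Proof.
move=> P Ac T D P' E.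
have [m] := ubnP #|reversed_edges le le'|; elim: m le P Ac T D E => // m IH le P Ac T D E ltm.
have [d0 | [[u v] uv]] := set_0Vmem (reversed_edges le le').
  exact: eq_dynkin_point (reversed_edges0_eq P P' E d0) D.
have /andP[cuv _] : covers le u v && covers le' v u by rewrite inE in uv.
have [U [C tu tv]] := edge_cut_exists_terminal cuv Ac T.
have EF := hasse_adj_edge_flip P C.
apply: (IH (edge_flip le u v U)).
- exact: edge_flip_poset.
- by apply: eq_hasse_acyclic Ac => i j; rewrite EF.
- by apply: eq_terminal T => i j; rewrite EF.
- exact: dynkin_point_edge_flip.
- by move=> i j; rewrite E EF.
- by apply: leq_trans (card_reversed_edges_flip P C P' uv) _; rewrite -ltnS.
Qed.
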